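(* Let $n\geq 2$, $m\geq 1$ be integers and $K_{n,m}=T(3,3m+2;2,n-2)$. Its (symmetrized) Alexander polynomial is $$\Delta(K_{n,m})=(-1)^{n-1}+\sum_{i=1}^{n-1}(-1)^{n-i-1}(t^i+t^{-i})-\sum_{k=1}^{m}(t^{n+3k-2}+t^{-n-3k+2})+\sum_{k=1}^{m}(t^{n+3k-1}+t^{-n-3k+1}).$$
   Context: The twisted torus knot $T(u,v;u',v')$ is obtained from the torus knot $T(u,v)$ by adding $v'$ full right-handed twists on $u'$ adjacent strands. *)

From HB Require Import structures.
From mathcomp Require Import all_boot all_order all_algebra.
Set Implicit Arguments. Unset Strict Implicit. Unset Printing Implicit Defensive.
Import Order.TTheory GRing.Theory Num.Theory.
Local Open Scope ring_scope.

(* Braid words on 3 strands: a letter i : 'I_2 stands for the positive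
   Artin generator sigma_(i+1). *)
Definition braid3 := seq 'I_2.

(* Reduced Burau representation of the 3-strand braid group (positive
   generators only, so entries lie in Z[t]):
   sigma_1 |-> [[-t, 1], [0, 1]],  sigma_2 |-> [[1, 0], [t, -t]]. *)
Definition burau_gen (i : 'I_2) : 'M[{poly int}]_2 :=
  if val i == 0%N then
    \matrix_(r < 2, c < 2)
      (if (val r == 0%N) && (val c == 0%N) then - 'X
       else if (val r == 0%N) then 1 else if (val c == 1%N) then 1 else 0)
  else
    \matrix_(r < 2, c < 2)
      (if (val r == 0%N) && (val c == 0%N) then 1
       else if (val r == 0%N) then 0 else if (val c == 0%N) then 'X else - 'X).

Definition burau (w : braid3) : 'M[{poly int}]_2 :=
  foldr (fun g M => burau_gen g *m M) 1%:M w.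

Definition sig1 : 'I_2 := ord0.
Definition sig2 : 'I_2 := ord_max.

(* Twisted torus knot T(3, q; 2, s): closure of the 3-braid
   (sigma_1 sigma_2)^q (sigma_1^2)^s  (s full twists on 2 adjacent strands). *)
Definition twisted_torus_3_2 (q s : nat) : braid3 :=
  flatten (nseq q [:: sig1; sig2]) ++ nseq (2 * s) sig1.

(* Laurent polynomials are represented by a polynomial D together with a
   shift N : the Laurent polynomial is t^(-N) * D(t).
   Alexander polynomial of the closure of a 3-braid w (well defined up to
   units +-t^k of Z[t,t^-1]) : Delta satisfies
     (1 + t + t^2) * Delta(t)  =  +- t^k * det(I - burau w). *)
Definition alexander_assoc3 (w : braid3) (D : {poly int}) : Prop :=
  exists (s : int) (a b : nat), (s = 1 \/ s = -1) /\
    s *: ('X ^+ a * \det (1%:M - burau w)) = 'X ^+ b * (D * (1 + 'X + 'X ^+ 2)).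

(* The symmetrized Alexander polynomial of the closure of w equals
   t^(-N) D(t): it is an Alexander polynomial, symmetric under
   t <-> t^-1, and takes value 1 at t = 1 (these determine it uniquely). *)
Definition symmetrized_alexander3 (w : braid3) (N : nat) (D : {poly int}) : Prop :=
  [/\ alexander_assoc3 w D,
      ((size D <= 2 * N + 1)%N /\ (forall i, (i <= 2 * N)%N -> D`_i = D`_(2 * N - i)))
    & D.[1] = 1].

From HB Require Import structures.
From mathcomp Require Import all_boot all_algebra.
From mathcomp Require Import ring zify.
Set Implicit Arguments. Unset Strict Implicit. Unset Printing Implicit Defensive.
Import GRing.Theory.
Local Open Scope ring_scope.

(* The reduced Burau image of the full twist (sigma_1 sigma_2)^3 is the scalar
   t^3, so, with s = n - 2, the braid (sigma_1 sigma_2)^(3m+2) sigma_1^(2s) maps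
   to t^(3m) (sigma_1 sigma_2)^2 sigma_1^(2s), and det(I - .) equals
   1 + Y (a + c) + Y^2 a with Y = t^(3m+2), a = t^(2s) and
   c = 1 - t + ... - t^(2s-1).  After multiplication by 1 + t, both this
   determinant and (1 + t + t^2) times the claimed polynomial telescope to the
   same six-term polynomial.  The claimed polynomial is a sum of symmetric pairs
   t^j + t^-j, hence palindromic, and its value at 1 is 1: the alternating part
   contributes 1 and the two step-3 sums cancel. *)

Section Matrix2.
Variable R : comNzRingType.

Definition mx2 (a b c d : R) : 'M[R]_2 :=
  \matrix_(i < 2, j < 2)
    if val i == 0%N then (if val j == 0%N then a else b)
    else (if val j == 0%N then c else d).

Lemma eq_mx2 (A : 'M[R]_2) a b c d :
  A 0 0 = a -> A 0 1 = b -> A 1 0 = c -> A 1 1 = d -> A = mx2 a b c d.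
Proof.
move=> A00 A01 A10 A11; apply/matrixP => i j; rewrite mxE.
case: i => [[|[|//]] i2]; case: j => [[|[|//]] j2] /=.
- by rewrite -A00; congr (A _ _); apply: val_inj.
- by rewrite -A01; congr (A _ _); apply: val_inj.
- by rewrite -A10; congr (A _ _); apply: val_inj.
- by rewrite -A11; congr (A _ _); apply: val_inj.
Qed.

Lemma mul_mx2 a b c d a' b' c' d' :
  mx2 a b c d *m mx2 a' b' c' d' =
  mx2 (a * a' + b * c') (a * b' + b * d') (c * a' + d * c') (c * b' + d * d').
Proof. by apply: eq_mx2; rewrite !mxE !big_ord_recl big_ord0 !mxE /= addr0. Qed.

Lemma scale_mx2 k a b c d : k *: mx2 a b c d = mx2 (k * a) (k * b) (k * c) (k * d).
Proof. by apply: eq_mx2; rewrite !mxE. Qed.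

Lemma sub_mx2 a b c d a' b' c' d' :
  mx2 a b c d - mx2 a' b' c' d' = mx2 (a - a') (b - b') (c - c') (d - d').
Proof. by apply: eq_mx2; rewrite !mxE. Qed.

Lemma scalar_mx2 a : a%:M = mx2 a 0 0 a.
Proof. by apply: eq_mx2; rewrite !mxE. Qed.

Lemma det_mx2 a b c d : \det (mx2 a b c d) = a * d - b * c.
Proof.
rewrite (expand_det_row _ 0) !big_ord_recl big_ord0 /cofactor !det_mx11 !mxE /=.
rewrite expr0 expr1; ring.
Qed.

End Matrix2.

Lemma burau_sig1 : burau_gen sig1 = mx2 (- 'X) 1 0 1.
Proof. by apply: eq_mx2; rewrite !mxE. Qed.

Lemma burau_sig2 : burau_gen sig2 = mx2 1 0 'X (- 'X).
Proof. by apply: eq_mx2; rewrite !mxE. Qed.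

Lemma burau_cat w1 w2 : burau (w1 ++ w2) = burau w1 *m burau w2.
Proof. by elim: w1 => [|g w IHw] /=; rewrite ?mul1mx // -/(burau _) IHw mulmxA. Qed.

Lemma burau_nseq g k : burau (nseq k g) = burau_gen g ^+ k.
Proof. by elim: k => [|k IHk] //=; rewrite -/(burau _) IHk exprS mulmxE. Qed.

Lemma burau_flatten_nseq w k : burau (flatten (nseq k w)) = burau w ^+ k.
Proof. by elim: k => [|k IHk] //=; rewrite burau_cat IHk exprS mulmxE. Qed.

Lemma burau_sig1X k :
  burau_gen sig1 ^+ k = mx2 ((- 'X) ^+ k) (\sum_(i < k) (- 'X) ^+ i) 0 1.
Proof.
elim: k => [|k IHk]; first by rewrite expr0 big_ord0 -scalar_mx2.
by rewrite exprSr IHk burau_sig1 -mulmxE mul_mx2 big_ord_recr /= exprSr; congr mx2; ring.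
Qed.

Lemma burau_full_twist : burau [:: sig1; sig2] ^+ 3 = ('X ^+ 3)%:M.
Proof.
rewrite /burau /= mulmx1 burau_sig1 burau_sig2 !exprS expr0 mulr1 -!mulmxE.
by rewrite scalar_mx2 !mul_mx2; congr mx2; ring.
Qed.

Lemma burau_torus_braid k :
  burau (flatten (nseq (3 * k + 2) [:: sig1; sig2])) =
  'X ^+ (3 * k + 2) *: mx2 (-1) 1 (-1) 0.
Proof.
rewrite burau_flatten_nseq exprD exprM burau_full_twist -rmorphXn -mulmxE.
rewrite mul_scalar_mx /burau /= mulmx1 burau_sig1 burau_sig2 expr2 -mulmxE !mul_mx2.
by rewrite !scale_mx2 exprD -exprM; congr mx2; ring.
Qed.

Lemma det_one_sub_torus_twist (R : comNzRingType) (Y a c : R) :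
  \det (1%:M - Y *: mx2 (-1) 1 (-1) 0 *m mx2 a c 0 1) = 1 + Y * (a + c) + Y ^+ 2 * a.
Proof. by rewrite -scalemxAl mul_mx2 scale_mx2 scalar_mx2 sub_mx2 det_mx2; ring. Qed.

Lemma det_burau_twisted_torus m s :
  (1 + 'X) * \det (1%:M - burau (twisted_torus_3_2 (3 * m + 2) s)) =
  1 + 'X + 'X ^+ (3 * m + 2) + 'X ^+ (2 * s + 3 * m + 3)
    + 'X ^+ (2 * s + 6 * m + 4) + 'X ^+ (2 * s + 6 * m + 5).
Proof.
rewrite burau_cat burau_torus_braid burau_nseq burau_sig1X det_one_sub_torus_twist.
have geom : (1 + 'X) * \sum_(i < 2 * s) (- 'X) ^+ i = 1 - (- 'X) ^+ (2 * s) :> {poly int}.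
  by rewrite -opprB subrX1 -mulNr opprB opprK.
set Y := 'X ^+ (3 * m + 2); set a := (- 'X) ^+ (2 * s); set c := \sum_(i < _) _.
have -> : (1 + 'X) * (1 + Y * (a + c) + Y ^+ 2 * a) =
          (1 + 'X) * (1 + Y * a + Y ^+ 2 * a) + Y * ((1 + 'X) * c) by ring.
rewrite geom {}/Y {}/a exprNn -signr_odd mul2n odd_double mul1r -mul2n.
by rewrite ![(_ * m)%N]mulnC ![(_ * s)%N]mulnC !exprD !exprM; ring.
Qed.

Section Palindromic.
Variable R : comNzRingType.
Implicit Types (N : nat) (p q : {poly R}).

Definition palindromic N : pred {poly R} := fun p =>
  (size p <= 2 * N + 1)%N && [forall i : 'I_(2 * N + 1), p`_i == p`_(2 * N - i)].

Lemma palindromicP N p :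
  reflect ((size p <= 2 * N + 1)%N /\ (forall i, (i <= 2 * N)%N -> p`_i = p`_(2 * N - i)))
          (p \in palindromic N).
Proof.
apply: (iffP andP) => [[size_p /forallP coef_p] | [size_p coef_p]]; split => //.
  by move=> i le_i; apply/eqP/(coef_p (Ordinal (_ : i < 2 * N + 1)%N)); rewrite addn1.
by apply/forallP => i; apply/eqP/coef_p; case: i => i /=; rewrite addn1 ltnS.
Qed.

Fact palindromic_zmod_closed N : zmod_closed (palindromic N).
Proof.
split; first by apply/palindromicP; split => [|i _]; rewrite ?size_poly0 ?coef0.
move=> p q /palindromicP[size_p coef_p] /palindromicP[size_q coef_q].
apply/palindromicP; split; last first.
  by move=> i le_i; rewrite !coefB (coef_p i le_i) (coef_q i le_i).
by rewrite (leq_trans (size_polyD _ _)) // size_polyN geq_max size_p size_q.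
Qed.

HB.instance Definition _ N :=
  GRing.isZmodClosed.Build {poly R} (palindromic N) (palindromic_zmod_closed N).

Lemma palindromic_Xn N : 'X ^+ N \in palindromic N.
Proof.
apply/palindromicP; split => [|i le_i]; first by rewrite size_polyXn addn1 ltnS leq_pmull.
by rewrite !coefXn; congr (_%:R); apply/eqP/eqP; lia.
Qed.

End Palindromic.

Section SymmetricPairs.
Variable R : comNzRingType.
Implicit Types (N n a m j s : nat).

Definition sympair N j : {poly R} := 'X ^+ (N + j) + 'X ^+ (N - j).

Definition alt_sympairs N n : {poly R} :=
  (-1) ^+ (n - 1) * 'X ^+ N + \sum_(1 <= i < n) (-1) ^+ (n - i - 1) * sympair N i.

Definition sympairs_step3 N a m : {poly R} :=
  \sum_(1 <= k < m.+1) sympair N (a + 3 * k).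

Lemma alt_sympairsS N n :
  (0 < n)%N -> alt_sympairs N n.+1 = sympair N n - alt_sympairs N n.
Proof.
move=> n_gt0; rewrite /alt_sympairs big_nat_recr //= subSnn expr0 mul1r.
have sgS i : (i < n)%N -> (-1) ^+ (n.+1 - i - 1) = - (-1) ^+ (n - i - 1) :> {poly R}.
  by move=> lt_in; rewrite (_ : n.+1 - i - 1 = (n - i - 1).+1)%N ?exprS ?mulN1r //; lia.
rewrite -[(n.+1 - 1)%N]/(n.+1 - 0 - 1)%N (sgS 0%N) // subn0.
rewrite (eq_big_nat _ _ (F2 := fun i => - ((-1) ^+ (n - i - 1) * sympair N i))).
  by rewrite sumrN; ring.
by move=> i /andP[_ lt_in]; rewrite sgS // mulNr.
Qed.

Lemma mulX1_alt_sympairs N n :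
  (0 < n <= N)%N -> (1 + 'X) * alt_sympairs N n = 'X ^+ (N + n) + 'X ^+ (N - n).+1.
Proof.
elim: n => [//|n IHn] /andP[_ lt_nN].
have [-> | n_gt0] := posnP n.
  rewrite /alt_sympairs big_geq // addr0 mul1r subn1 prednK; last lia.
  by rewrite addn1 exprS; ring.
rewrite alt_sympairsS // mulrBr IHn; last by rewrite n_gt0 ltnW.
by rewrite /sympair subnSK // addnS !exprS; ring.
Qed.

Lemma mulX2_sympair_step N j : (j < N)%N ->
  (1 + 'X + 'X ^+ 2) * (sympair N j.+1 - sympair N j) =
  ('X ^+ (N + j + 3) - 'X ^+ (N + j)) + ('X ^+ (N - j - 1) - 'X ^+ (N - j + 2)).
Proof.
move=> lt_jN; rewrite /sympair addnS subnS; set p := (N - j - 1)%N.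
have -> : (N - j = p.+1)%N by rewrite /p; lia.
by rewrite /= !exprS !exprD; ring.
Qed.

Lemma mulX2_sympairs_step3 N a m : (a + 3 * m < N)%N ->
  (1 + 'X + 'X ^+ 2) * (sympairs_step3 N a.+1 m - sympairs_step3 N a m) =
  'X ^+ (N + a + 3 * m + 3) - 'X ^+ (N + a + 3) + 'X ^+ (N - a - 3 * m - 1)
    - 'X ^+ (N - a - 1).
Proof.
move=> lt_N; rewrite /sympairs_step3 -sumrB mulr_sumr.
pose f k : {poly R} := 'X ^+ (N + (a + 3 * k)).
pose g k : {poly R} := 'X ^+ (N + 2 - (a + 3 * k)).
rewrite (telescope_sumr_eq (fun k => f k + g k)) //; last first.
  move=> k /andP[_ le_km]; rewrite addSn mulX2_sympair_step; last lia.
  rewrite /f /g (_ : N + (a + 3 * k) + 3 = N + (a + 3 * k.+1))%N; last lia.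
  rewrite (_ : N - (a + 3 * k) - 1 = N + 2 - (a + 3 * k.+1))%N; last lia.
  rewrite (_ : N - (a + 3 * k) + 2 = N + 2 - (a + 3 * k))%N; last lia.
  ring.
rewrite /f /g (_ : N + (a + 3 * m.+1) = N + a + 3 * m + 3)%N; last lia.
rewrite (_ : N + 2 - (a + 3 * m.+1) = N - a - 3 * m - 1)%N; last lia.
rewrite (_ : N + (a + 3 * 1) = N + a + 3)%N; last lia.
rewrite (_ : N + 2 - (a + 3 * 1) = N - a - 1)%N; last lia.
ring.
Qed.

Lemma palindromic_sympair N j : (j <= N)%N -> sympair N j \in palindromic N.
Proof.
move=> le_jN; apply/palindromicP; split => [|i le_i].
  by rewrite (leq_trans (size_polyD _ _)) // geq_max !size_polyXn; apply/andP; split; lia.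
rewrite !coefD !coefXn addrC; congr (_%:R + _%:R); apply/eqP/eqP; lia.
Qed.

Lemma palindromic_alt_sympairs N n :
  (n <= N.+1)%N -> alt_sympairs N n \in palindromic N.
Proof.
move=> le_n; rewrite rpredD ?rpredMsign ?palindromic_Xn // big_nat_cond.
rewrite rpred_sum // => i /andP[/andP[_ lt_in] _].
by rewrite rpredMsign palindromic_sympair // -ltnS (leq_trans lt_in).
Qed.

Lemma palindromic_sympairs_step3 N a m :
  (a + 3 * m <= N)%N -> sympairs_step3 N a m \in palindromic N.
Proof.
move=> le_N; rewrite /sympairs_step3 big_nat_cond rpred_sum // => k.
by move=> /andP[/andP[_ le_km] _]; apply: palindromic_sympair; lia.
Qed.

Lemma horner1_sympair N j : (sympair N j).[1] = 1 + 1.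
Proof. by rewrite hornerD !hornerXn !expr1n. Qed.

Lemma horner1_alt_sympairs N n : (0 < n)%N -> (alt_sympairs N n).[1] = 1.
Proof.
elim: n => [//|[|n] IHn] _.
  by rewrite /alt_sympairs big_geq // addr0 mul1r hornerXn expr1n.
by rewrite alt_sympairsS // hornerD hornerN IHn // horner1_sympair addrK.
Qed.

Lemma horner1_sympairs_step3 N a m : (sympairs_step3 N a m).[1] = (1 + 1) *+ m.
Proof.
rewrite horner_sum (eq_bigr (fun=> 1 + 1)) => [|k _]; last exact: horner1_sympair.
by rewrite sumr_const_nat subn1.
Qed.

Definition twisted_torus_delta n m : {poly R} :=
  let N := (n + 3 * m - 1)%N in
  alt_sympairs N n - \sum_(1 <= k < m.+1) sympair N (n + 3 * k - 2)
  + \sum_(1 <= k < m.+1) sympair N (n + 3 * k - 1).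

Lemma twisted_torus_deltaE s m :
  twisted_torus_delta s.+2 m = alt_sympairs (s + 3 * m).+1 s.+2
    - sympairs_step3 (s + 3 * m).+1 s m + sympairs_step3 (s + 3 * m).+1 s.+1 m.
Proof.
by rewrite /twisted_torus_delta; congr (_ - _ + _); apply: eq_bigr => k _; congr sympair; lia.
Qed.

Lemma mul_cyclo_twisted_torus_delta n m : (1 < n)%N -> (0 < m)%N ->
  (1 + 'X) * ((1 + 'X + 'X ^+ 2) * twisted_torus_delta n m) =
  1 + 'X + 'X ^+ (3 * m + 2) + 'X ^+ (2 * (n - 2) + 3 * m + 3)
    + 'X ^+ (2 * (n - 2) + 6 * m + 4) + 'X ^+ (2 * (n - 2) + 6 * m + 5).
Proof.
case: n => [|[|s]] // _ m_gt0; rewrite subn2 /= twisted_torus_deltaE.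
have [N eN] : {N | N = (s + 3 * m).+1} by eexists.
rewrite -eN.
have -> : forall A S0 S1 : {poly R}, (1 + 'X) * ((1 + 'X + 'X ^+ 2) * (A - S0 + S1)) =
    (1 + 'X + 'X ^+ 2) * ((1 + 'X) * A) + (1 + 'X) * ((1 + 'X + 'X ^+ 2) * (S1 - S0)).
  by move=> *; ring.
rewrite mulX1_alt_sympairs ?mulX2_sympairs_step3; try lia.
rewrite (_ : N + s.+2 = 2 * s + 3 * m + 3)%N; last lia.
rewrite (_ : (N - s.+2).+1 = 3 * m)%N; last lia.
rewrite (_ : N + s + 3 * m + 3 = 2 * s + 6 * m + 4)%N; last lia.
rewrite (_ : N + s + 3 = 2 * s + 3 * m + 4)%N; last lia.
rewrite (_ : N - s - 3 * m - 1 = 0)%N; last lia.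
rewrite (_ : N - s - 1 = 3 * m)%N; last lia.
by rewrite ![(_ * m)%N]mulnC ![(_ * s)%N]mulnC !exprD !exprM; ring.
Qed.

Lemma palindromic_twisted_torus_delta n m :
  (1 < n)%N -> twisted_torus_delta n m \in palindromic (n + 3 * m - 1).
Proof.
case: n => [|[|s]] // _; rewrite twisted_torus_deltaE.
rewrite rpredD ?rpredB ?palindromic_alt_sympairs ?palindromic_sympairs_step3 //; lia.
Qed.

Lemma horner1_twisted_torus_delta n m : (1 < n)%N -> (twisted_torus_delta n m).[1] = 1.
Proof.
case: n => [|[|s]] // _; rewrite twisted_torus_deltaE.
by rewrite hornerD hornerD hornerN horner1_alt_sympairs // !horner1_sympairs_step3 subrK.
Qed.

End SymmetricPairs.

Arguments twisted_torus_delta {R} n m.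

Theorem lemma3p1 (n m : nat) (hn : (2 <= n)%N) (hm : (1 <= m)%N) :
  let N := (n + 3 * m - 1)%N in
  symmetrized_alexander3 (twisted_torus_3_2 (3 * m + 2) (n - 2)) N
    ((-1) ^+ (n - 1) * 'X ^+ N
     + \sum_(1 <= i < n) (-1) ^+ (n - i - 1) * ('X ^+ (N + i) + 'X ^+ (N - i))
     - \sum_(1 <= k < m.+1) ('X ^+ (N + (n + 3 * k - 2)) + 'X ^+ (N - (n + 3 * k - 2)))
     + \sum_(1 <= k < m.+1) ('X ^+ (N + (n + 3 * k - 1)) + 'X ^+ (N - (n + 3 * k - 1)))).
Proof.
move=> N; change (symmetrized_alexander3 (twisted_torus_3_2 (3 * m + 2) (n - 2)) N
                                         (twisted_torus_delta n m)).
have X1_neq0 : 1 + 'X != 0 :> {poly int} by rewrite addrC -polyC1 monic_neq0 ?monicXaddC.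
split.
- exists 1, 0%N, 0%N; split; first by left.
  apply: (mulfI X1_neq0); rewrite scale1r !mul1r det_burau_twisted_torus.
  by rewrite [_ * (1 + _ + _)]mulrC mul_cyclo_twisted_torus_delta.
- exact/palindromicP/palindromic_twisted_torus_delta.
- exact: horner1_twisted_torus_delta.
Qed.
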